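(* For all $m,n\ge 3$, the state complexities of the four languages $U_m(a,b,c)\cup (U_n(a,b,c))^R$, $U_m(a,b,c)\cap (U_n(a,b,c))^R$, $U_m(a,b,c)\setminus (U_n(a,b,c))^R$ and $(U_n(a,b,c))^R\setminus U_m(a,b,c)$ are all equal to $m2^n-(m-1)$, and the state complexity of $U_m(a,b,c)\oplus (U_n(a,b,c))^R$ is $m2^n$.
   Context: The state complexity of a regular language is the number of states of its minimal complete DFA. For $n\ge 3$, $\mathcal{U}_n(a,b,c)$ is the DFA over alphabet $\{a,b,c\}$ with state set $\{0,\dots,n-1\}$, initial state $0$, final state set $\{n-1\}$, where $a$ maps $i\mapsto i+1\pmod n$; $b$ swaps states $0$ and $1$ and fixes all others; $c$ maps state $n-1$ to state $0$ and fixes all other states. $U_n(a,b,c)$ is its language. $L^R$ denotes the reversal of $L$; $\setminus$ is set difference and $\oplus$ is symmetric difference. *)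

From mathcomp Require Import all_boot.
Set Implicit Arguments. Unset Strict Implicit. Unset Printing Implicit Defensive.

Inductive letter := La | Lb | Lc.
Definition word := seq letter.
Definition language := word -> bool.

Record dfa := Dfa {
  dfa_state : finType;
  dfa_init : dfa_state;
  dfa_delta : dfa_state -> letter -> dfa_state;
  dfa_final : pred dfa_state }.

Definition dfa_accepts (D : dfa) (w : word) : bool :=
  @dfa_final D (foldl (@dfa_delta D) (@dfa_init D) w).

Definition recognizes (D : dfa) (L : language) : Prop :=
  forall w, dfa_accepts D w = L w.

Definition state_complexity (L : language) (k : nat) : Prop :=
  (exists D : dfa, recognizes D L /\ #|dfa_state D| = k) /\
  (forall D : dfa, recognizes D L -> k <= #|dfa_state D|).

Definition U_step (n : nat) (i : nat) (x : letter) : nat :=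
  match x with
  | La => (i.+1) %% n
  | Lb => if i == 0 then 1 else if i == 1 then 0 else i
  | Lc => if i == n.-1 then 0 else i
  end.

Definition U (n : nat) : language :=
  fun w => foldl (U_step n) 0 w == n.-1.

Definition lrev (L : language) : language := fun w => L (rev w).

From mathcomp Require Import all_boot.
From mathcomp Require Import zify.
From Stdlib Require Import ClassicalEpsilon.
Set Implicit Arguments. Unset Strict Implicit. Unset Printing Implicit Defensive.

(* Write d_k for the transition function of U_k.  A word w drives the
   natural automaton for L_f = { w | f (w \in U_m) (w^R \in U_n) } to the
   pair (d_m(0,w), B_w), where B_w = { q < n | d_n(q, w^R) = n-1 } is the
   subset state of the reversal.  This product automaton has m 2^n states;
   when f(-, e) is constant, all pairs whose subset is constantly e have
   the same future and merge into a single sink, leaving m 2^n - (m-1).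
   The heart of the proof (reach_all) is that EVERY pair (p, B) is reached.
   Appending ab permutes B by rot = a o b, which fixes 1 and cycles
   0, 2, ..., n-1; conjugating the letter c (resp. the word bcb) by powers
   of rot overwrites one bit of B by its rot-successor (resp. by the bit
   at 1).
   With these two moves any pattern keeping the bit at 1 is written, and
   two starting words supply both values of that bit.  Reachability for
   the pair (U_n, U_m) read backwards yields separating suffixes, so the
   (merged) states are pairwise distinguishable and the fooling-set bound
   lemma (fooling_set_bound) gives the matching lower bound.  The five
   languages of the theorem are instances of L_f. *)

Lemma U_step_lt k i x : 1 < k -> i < k -> U_step k i x < k.
Proof.
move=> hk hi; case: x => /=.
- by rewrite ltn_mod; lia.
- case: eqP => _; first by [].
  by case: eqP => _ //; lia.
- by case: eqP => _ //; lia.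
Qed.

Lemma U_run_lt k i v : 1 < k -> i < k -> foldl (U_step k) i v < k.
Proof.
by move=> hk; elim: v i => [|x v IH] i hi //=; apply: IH; apply: U_step_lt.
Qed.

Lemma U_run_a k q t : q < k -> foldl (U_step k) q (nseq t La) = (q + t) %% k.
Proof.
elim: t q => [|t IH] q hq /=; first by rewrite addn0 modn_small.
rewrite IH ?ltn_mod; last by lia.
by rewrite modnDml addnS addSn.
Qed.

Lemma modS_small x k : x < k -> x.+1 %% k = if x.+1 == k then 0 else x.+1.
Proof.
move=> h; case: eqP => [->|ne]; first by rewrite modnn.
by rewrite modn_small //; lia.
Qed.

Section Reachability.
Variables m n : nat.

Definition revset (w : word) (q : nat) : bool :=
  foldl (U_step n) q (rev w) == n.-1.

Definition reachable (p : nat) (B : nat -> bool) : Prop :=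
  exists w : word, foldl (U_step m) 0 w = p /\ forall q, q < n -> revset w q = B q.

Lemma reachable_ext p B B' :
  reachable p B -> (forall q, q < n -> B q = B' q) -> reachable p B'.
Proof. by case=> w [h1 h2] he; exists w; split=> // q hq; rewrite h2 // he. Qed.

Lemma reachable_cat p B v : 1 < n -> reachable p B ->
  reachable (foldl (U_step m) p v) (fun q => B (foldl (U_step n) q (rev v))).
Proof.
move=> hn [w [h1 h2]]; exists (w ++ v); split; first by rewrite foldl_cat h1.
move=> q hq; rewrite /revset rev_cat foldl_cat -h2 //.
exact: U_run_lt.
Qed.

End Reachability.

Section AllPairsReachable.
Variable n : nat.
Hypothesis hn : 3 <= n.

(* rot = a o b, the action of the suffix ab on subset states.  It fixes 1
   and cycles the other states in the order cyc 0, cyc 1, ..., cyc (n-2),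
   where cyc enumerates 0, 2, 3, ..., n-1. *)
Definition rot (q : nat) : nat := U_step n (U_step n q Lb) La.
Definition cyc (i : nat) : nat := if i == 0 then 0 else i.+1.

(* The states on the cycle of rot, i.e. all states but the fixed point 1,
   which we call the pivot. *)
Definition movable (x : nat) : bool := (x < n) && (x != 1).

Ltac decide_eqs := repeat match goal with
  | |- context [?a == ?b] =>
     (have -> : (a == b) = false by apply/eqP; lia) ||
     (have -> : (a == b) = true by apply/eqP; lia)
  end.

Lemma rot_cyc i : i < n.-1 -> rot (cyc i) = cyc (i.+1 %% n.-1).
Proof.
move=> hi; rewrite modS_small // /rot /cyc /=.
case: i hi => [|i] hi /=; decide_eqs => /=.
  by rewrite modn_small; lia.
case: (ltngtP i.+2 n.-1) => h; decide_eqs => //=; [by rewrite modn_small; lia | lia | ].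
have -> : i.+3 = n by lia.
by rewrite modnn.
Qed.

Lemma iter_rot_cyc i k : i < n.-1 -> iter k rot (cyc i) = cyc ((i + k) %% n.-1).
Proof.
move=> hi; elim: k => [|k IH]; first by rewrite addn0 modn_small.
rewrite iterS IH rot_cyc; last by rewrite ltn_mod; lia.
by rewrite -addn1 modnDml addn1 addnS.
Qed.

Lemma iter_rot1 k : iter k rot 1 = 1.
Proof. by elim: k => //= k ->; rewrite /rot /= modn_small //; lia. Qed.

Lemma cyc_pred x : x != 1 -> cyc x.-1 = x.
Proof. by rewrite /cyc; case: x => [|[|x]]. Qed.

Lemma cyc_inj : injective cyc.
Proof. move=> a b; rewrite /cyc; case: eqP; case: eqP => ? ? ?; lia. Qed.

Lemma movable_cyc i : i < n.-1 -> movable (cyc i).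
Proof. by rewrite /movable /cyc; case: eqP => ? ?; apply/andP; split; lia. Qed.

Lemma iter_rot_lt k q : q < n -> iter k rot q < n.
Proof.
move=> hq; elim: k => //= k IH.
by apply: U_step_lt; [lia | apply: U_step_lt => //; lia].
Qed.

Lemma iter_rot_period q : q < n -> iter n.-1 rot q = q.
Proof.
move=> hq; case: (q =P 1) => [->|/eqP ne]; first exact: iter_rot1.
rewrite -(cyc_pred ne) iter_rot_cyc; last lia.
by rewrite modnDr modn_small //; lia.
Qed.

Lemma rot_transitive x z : movable x -> movable z -> exists d, iter d rot x = z.
Proof.
move=> /andP [hx nx] /andP [hz nz].
exists (z.-1 + (n.-1 - x.-1)).
rewrite -[X in iter _ rot X](cyc_pred nx) iter_rot_cyc; last lia.
have -> : x.-1 + (z.-1 + (n.-1 - x.-1)) = z.-1 + n.-1 by lia.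
by rewrite modnDr modn_small ?cyc_pred //; lia.
Qed.

Lemma iter_rot_to_last x : movable x -> iter (n.-1.-1 - x.-1) rot x = n.-1.
Proof.
case/andP=> hx nx; rewrite -[X in iter _ rot X](cyc_pred nx) iter_rot_cyc; last lia.
have -> : x.-1 + (n.-1.-1 - x.-1) = n.-1.-1 by lia.
rewrite modn_small /cyc; last lia.
by case: eqP => ?; lia.
Qed.

Lemma rot_movable x : movable x -> movable (rot x) /\ rot x != x.
Proof.
case/andP=> hx nx; rewrite -(cyc_pred nx) rot_cyc; last lia.
split; first by apply: movable_cyc; rewrite ltn_mod; lia.
apply/eqP => /cyc_inj; rewrite modS_small; last lia.
by case: eqP => ?; lia.
Qed.

Variable m : nat.
Hypothesis hm : 3 <= m.

Local Notation R B := (reachable m n 0 B).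

Let hn1 : 1 < n. Proof. lia. Qed.

(* The suffix ab returns U_m to 0 and precomposes B with rot. *)
Lemma reachable_rot B : R B -> R (fun q => B (rot q)).
Proof. by move=> h; have := reachable_cat [:: La; Lb] hn1 h; rewrite /= modn_small //; lia. Qed.

Lemma reachable_iter_rot k B : R B -> R (fun q => B (iter k rot q)).
Proof.
elim: k B => [|k IH] B h //.
by apply: reachable_ext (IH _ (reachable_rot h)) _ => q _; rewrite iterS.
Qed.

(* Conjugation by rot: if precomposing with phi preserves reachability and
   phi moves only the state n-1, then the bit of any movable state x can be
   overwritten by the bit of B at rot^(x.-1.+1) (phi (n-1)), others
   unchanged: rotate x to n-1, apply phi, and rotate back, using that rot
   has order n-1. *)
Lemma reachable_conjugate (phi : nat -> nat) :
  (forall B, R B -> R (fun q => B (phi q))) ->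
  (forall y, y < n -> y != n.-1 -> phi y = y) ->
  forall B x, movable x -> R B ->
  R (fun q => if q == x then B (iter x.-1.+1 rot (phi n.-1)) else B q).
Proof.
move=> hphi hfix B x tx hB; case/andP: (tx) => hx nx.
set j := n.-1.-1 - x.-1.
have hjk : x.-1.+1 + j = n.-1 by rewrite /j; lia.
apply: reachable_ext (reachable_iter_rot j (hphi _ (reachable_iter_rot x.-1.+1 hB))) _.
move=> q hq; have hjx : iter j rot x = n.-1 by exact: iter_rot_to_last.
case: eqP => [->|/eqP nq]; first by rewrite hjx.
rewrite hfix; first by rewrite -iterD hjk iter_rot_period.
  exact: iter_rot_lt.
apply/eqP => e.
have : iter x.-1.+1 rot (iter j rot q) =
       iter x.-1.+1 rot (iter j rot x) by rewrite e hjx.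
rewrite -!iterD hjk !iter_rot_period //.
by move/eqP; rewrite (negbTE nq).
Qed.

(* Conjugating c (which sends n-1 to 0): the bit at x copies its successor. *)
Lemma reachable_copy_succ B x : movable x -> R B ->
  R (fun q => if q == x then B (rot x) else B q).
Proof.
move=> tx hB.
have := reachable_conjugate (phi := fun q => U_step n q Lc) _ _ tx hB.
have -> : U_step n n.-1 Lc = cyc 0 by rewrite /= eqxx.
case/andP: tx => hx nx.
rewrite iter_rot_cyc; last lia.
rewrite -[in rot x](cyc_pred nx) rot_cyc; last lia.
rewrite add0n; apply.
- move=> B' h; have := reachable_cat [:: Lc] hn1 h.
  by rewrite /=; case: ifP.
- by move=> y _ /negbTE /= ->.
Qed.

(* Conjugating bcb (which sends n-1 to 1): the bit at x copies the bit at 1. *)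
Lemma reachable_copy_pivot B x : movable x -> R B ->
  R (fun q => if q == x then B 1 else B q).
Proof.
move=> tx hB.
have := reachable_conjugate
  (phi := fun q => U_step n (U_step n (U_step n q Lb) Lc) Lb) _ _ tx hB.
have -> : U_step n (U_step n (U_step n n.-1 Lb) Lc) Lb = 1.
  by rewrite /=; decide_eqs => /=; decide_eqs.
rewrite iter_rot1; apply.
- move=> B' h; have := reachable_cat [:: Lb; Lc; Lb] hn1 h.
  by rewrite /=; decide_eqs.
- move=> y hy ny /=.
  case: (y =P 0) => [->|/eqP y0] /=; first by decide_eqs.
  case: (y =P 1) => [->|/eqP y1] /=; first by decide_eqs.
  by rewrite (negbTE ny) (negbTE y0) (negbTE y1).
Qed.

(* If some rotate of the movable state x carries the complement of the bit
   at 1, the bit at x can be set to that complement, others unchanged: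
   propagate it backwards along the cycle, copying successors, and restore
   each intermediate bit from the pivot. *)
Lemma reachable_set_flipped d : forall B x, R B -> movable x ->
  B (iter d rot x) = ~~ B 1 -> R (fun q => if q == x then ~~ B 1 else B q).
Proof.
elim: d => [|d IH] B x hB tx hd.
  by apply: reachable_ext hB _ => q _; case: eqP => [->|//]; rewrite -hd.
have [tgx ngx] := rot_movable tx.
have h1 := IH B (rot x) hB tgx ltac:(by rewrite -iterSr).
have h2 := reachable_copy_succ tx h1.
have ng1 : (1 == rot x) = false by apply/negbTE; rewrite eq_sym; case/andP: tgx.
have nx1 : (1 == x) = false by apply/negbTE; rewrite eq_sym; case/andP: tx.
case: (boolP (B (rot x) == B 1)) => e.
  apply: reachable_ext (reachable_copy_pivot tgx h2) _ => q _.
  rewrite ng1 eqxx nx1.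
  case: (q =P rot x) => [->|nq]; first by rewrite (negbTE ngx) (eqP e).
  by case: (q =P x).
apply: reachable_ext h2 _ => q _.
rewrite eqxx; case: eqP => // _; case: eqP => [->|//].
by case: (B (rot x)) (B 1) e => [] [].
Qed.

Lemma pivot_notin l : all movable l -> (1 \in l) = false.
Proof. by move=> /allP h; apply/negbTE/negP => /h /andP []. Qed.

Lemma reachable_fill_flipped B z l : R B -> movable z -> B z = ~~ B 1 ->
  all movable l -> R (fun q => if q \in l then ~~ B 1 else B q).
Proof.
move=> hB tz hz; elim: l => [|x l IH] /=.
  by move=> _; apply: reachable_ext hB _.
case/andP=> tx tl.
set B' := (fun q => if q \in l then ~~ B 1 else B q) in IH.
have e1 : B' 1 = B 1 by rewrite /B' pivot_notin.
have [d hd] := rot_transitive tx tz.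
have h2 := reachable_set_flipped (IH tl) tx (_ : B' (iter d rot x) = ~~ B' 1).
apply: reachable_ext (h2 _) _ => [|q _].
  by rewrite hd e1 /B'; case: (z \in l).
by rewrite e1 in_cons /B'; case: (q =P x).
Qed.

Lemma reachable_fill_pivot B l : R B -> all movable l ->
  R (fun q => if q \in l then B 1 else B q).
Proof.
move=> hB; elim: l => [|x l IH] /=.
  by move=> _; apply: reachable_ext hB _.
case/andP=> tx tl.
set B' := (fun q => if q \in l then B 1 else B q) in IH.
have e1 : B' 1 = B 1 by rewrite /B' pivot_notin.
apply: reachable_ext (reachable_copy_pivot tx (IH tl)) _ => q _.
by rewrite e1 in_cons /B'; case: (q =P x).
Qed.

Lemma reachable_same_pivot B z : R B -> movable z -> B z = ~~ B 1 ->
  forall T, T 1 = B 1 -> R T.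
Proof.
move=> hB tz hz T hT.
set l1 := [seq x <- iota 0 n | movable x && (T x != B 1)].
set l2 := [seq x <- iota 0 n | movable x && (T x == B 1)].
have t1 : all movable l1 by apply/allP => x; rewrite mem_filter => /andP [/andP []].
have t2 : all movable l2 by apply/allP => x; rewrite mem_filter => /andP [/andP []].
apply: reachable_ext
  (reachable_fill_pivot (reachable_fill_flipped hB tz hz t1) t2) _ => q hq.
rewrite (pivot_notin t1) /l1 /l2 !mem_filter mem_iota /movable hq /=.
case: (q =P 1) => [->|nq] //=; rewrite !andbT.
case: (T q =P B 1) => [->|ne] //=.
by case: (T q) (B 1) ne => [] [].
Qed.

(* The empty word gives B = {n-1}: every T with T 1 = false is reached. *)
Lemma reachable_pivot_false T : T 1 = false -> R T.
Proof.
move=> hT; have hB : R (fun q => q == n.-1) by exists [::].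
apply: (reachable_same_pivot hB (z := n.-1)).
- by rewrite /movable; apply/andP; split; [|apply/eqP]; lia.
- by rewrite eqxx /=; apply/esym/eqP; lia.
- by rewrite hT; apply/esym/negbTE/eqP; lia.
Qed.

Lemma mod_pred_neq k : 0 < k -> (k.-1 %% n == k %% n) = false.
Proof.
move=> hk; have e : k = k.-1 + 1 by lia.
rewrite {2}e -{1}(addn0 k.-1) eqn_modDl mod0n modn_small //; lia.
Qed.

(* For pivot bit true, a word returning U_m to 0 (a^m if m = 1 mod n,
   a^(m-1) c otherwise) after a suitable singleton subset yields a witness
   with pivot bit true and bit false at 0. *)
Lemma reachable_origin T : R T.
Proof.
case: (boolP (T 1)) => hT; last by apply: reachable_pivot_false; apply/negbTE.
have t0 : movable 0 by rewrite /movable; apply/andP; split=> //; lia.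
case: (m %% n =P 1) => hmn.
  have := reachable_cat (nseq m La) hn1
    (reachable_pivot_false (T := fun q => q == 2) erefl).
  rewrite U_run_a ?add0n ?modnn; last lia.
  rewrite rev_nseq => h.
  apply: (reachable_same_pivot h t0) => /=.
    rewrite !U_run_a ?add0n ?hmn; try lia.
    rewrite -modnDmr hmn modn_small //; lia.
  rewrite U_run_a; last lia.
  by rewrite -modnDmr hmn modn_small // (eqP hT); lia.
have := reachable_cat (rcons (nseq m.-1 La) Lc) hn1
  (reachable_pivot_false (T := fun q => q == m %% n)
     ltac:(apply/negbTE/eqP => /esym; exact: hmn)).
rewrite foldl_rcons U_run_a ?add0n; last lia.
rewrite modn_small /=; last lia.
rewrite eqxx rev_rcons /= rev_nseq => h.
apply: (reachable_same_pivot h t0) => /=.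
  have -> : (0 == n.-1) = false by apply/negbTE/eqP; lia.
  have -> : (1 == n.-1) = false by apply/negbTE/eqP; lia.
  rewrite !U_run_a ?add0n; try lia.
  rewrite mod_pred_neq; last lia.
  by rewrite add1n prednK ?eqxx //; lia.
have -> : (1 == n.-1) = false by apply/negbTE/eqP; lia.
rewrite U_run_a ?add1n ?prednK ?eqxx ?(eqP hT) //; lia.
Qed.

(* Every pair (p, B) is reachable: shift by a from the previous p. *)
Theorem reach_all p T : p < m -> reachable m n p T.
Proof.
elim: p T => [|p IH] T hp; first exact: reachable_origin.
have := reachable_cat [:: La] hn1 (IH (fun q => T ((q + n.-1) %% n)) (ltnW hp)).
rewrite /= modn_small // => h; apply: reachable_ext h _ => q hq.
rewrite modnDml -addn1 -addnA add1n prednK; last lia.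
by rewrite modnDr modn_small.
Qed.

End AllPairsReachable.

Lemma fooling_set_bound (X : finType) (L : language) (W : X -> word) :
  (forall x y, x != y -> exists z, L (W x ++ z) != L (W y ++ z)) ->
  forall D, recognizes D L -> #|X| <= #|dfa_state D|.
Proof.
move=> hd D hD.
pose phi x := foldl (@dfa_delta D) (@dfa_init D) (W x).
suff inj : injective phi by apply: leq_card inj.
move=> x y e; apply/eqP; apply/negPn/negP => /hd [z].
by rewrite -!hD /dfa_accepts !foldl_cat -/(phi x) -/(phi y) e eqxx.
Qed.

Section Combination.
Variables m n : nat.
Hypothesis hm : 3 <= m.
Hypothesis hn : 3 <= n.

Variable f : bool -> bool -> bool.
Definition Lf : language := fun w => f (U m w) (lrev (U n) w).

Lemma Lf_cat w z : Lf (w ++ z) =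
  f (foldl (U_step m) (foldl (U_step m) 0 w) z == m.-1)
    (revset n w (foldl (U_step n) 0 (rev z))).
Proof. by rewrite /Lf /U /lrev /revset rev_cat !foldl_cat. Qed.

(* Reachability with the roles of U_m and U_n exchanged, read backwards:
   a suffix z can lead U_n^R to any state r and U_m into its final state
   from any prescribed set Y of states. *)
Lemma separating_suffix r (Y : nat -> bool) : r < n -> exists z,
  foldl (U_step n) 0 (rev z) = r /\
  forall p, p < m -> (foldl (U_step m) p z == m.-1) = Y p.
Proof.
move=> hr; case: (reach_all hm hn Y hr) => w [h1 h2].
by exists (rev w); rewrite revK; split.
Qed.

Definition ffun_pred (B : {ffun 'I_n -> bool}) : nat -> bool :=
  fun q => if insub q is Some i then B i else false.

Lemma ffun_pred_ord B (i : 'I_n) : ffun_pred B i = B i.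
Proof. by rewrite /ffun_pred valK. Qed.

Definition separable (p p' : nat) (B B' : {ffun 'I_n -> bool}) : Prop :=
  exists (i : 'I_n) (Y : nat -> bool), f (Y p) (B i) != f (Y p') (B' i).

Lemma separable_lower_bound (X : finType) (sp : X -> nat)
    (sB : X -> {ffun 'I_n -> bool}) :
  (forall x, sp x < m) ->
  (forall x y, x != y -> separable (sp x) (sp y) (sB x) (sB y)) ->
  forall D, recognizes D Lf -> #|X| <= #|dfa_state D|.
Proof.
move=> hsp hsep.
have ex x : exists w, foldl (U_step m) 0 w = sp x /\
    forall q, q < n -> revset n w q = ffun_pred (sB x) q.
  exact: (reach_all hn hm (ffun_pred (sB x)) (hsp x)).
pose W x := proj1_sig (constructive_indefinite_description _ (ex x)).
have hW x : foldl (U_step m) 0 (W x) = sp x /\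
    forall q, q < n -> revset n (W x) q = ffun_pred (sB x) q.
  exact: proj2_sig (constructive_indefinite_description _ (ex x)).
apply: (fooling_set_bound (W := W)) => x y nxy.
have [i [Y hne]] := hsep x y nxy.
have [[hx1 hx2] [hy1 hy2]] := (hW x, hW y).
have [z [hz1 hz2]] := separating_suffix Y (ltn_ord i).
exists z; rewrite !Lf_cat hz1 hx1 hy1 !hz2 ?hsp //.
by rewrite hx2 // hy2 // !ffun_pred_ord.
Qed.

Lemma separable_subsets p p' B B' :
  (forall u, exists y, f y u != f y (~~ u)) -> B != B' -> separable p p' B B'.
Proof.
move=> hf hB; have [i hi] : exists i, B i != B' i.
  apply/existsP; apply: contraR hB => /existsPn h; apply/eqP/ffunP => i.
  by apply/eqP; rewrite -[_ == _]negbK h.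
have [y0 hy0] := hf (B i); exists i, (fun _ => y0).
by have -> : B' i = ~~ B i by case: (B i) (B' i) hi => [] [].
Qed.

Lemma separable_states p p' (B : {ffun 'I_n -> bool}) :
  p != p' -> (exists i, f true (B i) != f false (B i)) -> separable p p' B B.
Proof.
move=> hp [i hi]; exists i, (fun q => q == p).
by rewrite eqxx (eq_sym p') (negbTE hp).
Qed.

Definition stepO k (i : 'I_k) x : 'I_k := insubd i (U_step k i x).

Lemma val_stepO k (i : 'I_k) x : 1 < k -> val (stepO i x) = U_step k i x.
Proof. by move=> hk; rewrite /stepO val_insubd U_step_lt. Qed.

Let m0 : 0 < m. Proof. lia. Qed.
Let n0 : 0 < n. Proof. lia. Qed.

(* The product of U_m with the subset construction for the reversal of U_n. *)
Definition pstate := ('I_m * {ffun 'I_n -> bool})%type.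
Definition pdelta (s : pstate) x : pstate :=
  (stepO s.1 x, [ffun i => s.2 (stepO i x)]).
Definition pinit : pstate := (Ordinal m0, [ffun i : 'I_n => val i == n.-1]).
Definition pfinal (s : pstate) := f (val s.1 == m.-1) (s.2 (Ordinal n0)).
Definition prod_dfa := Dfa pinit pdelta pfinal.

Lemma pdelta_run w : val (foldl pdelta pinit w).1 = foldl (U_step m) 0 w /\
  forall i, (foldl pdelta pinit w).2 i = revset n w i.
Proof.
elim/last_ind: w => [|w x [IH1 IH2]]; first by split => // i; rewrite /= ffunE.
rewrite !foldl_rcons /=; split; first by rewrite val_stepO ?IH1 //; lia.
by move=> i; rewrite ffunE IH2 /revset rev_rcons /= val_stepO //; lia.
Qed.

Lemma pfinal_run w : pfinal (foldl pdelta pinit w) = Lf w.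
Proof. by have [h1 h2] := pdelta_run w; rewrite /pfinal h1 h2. Qed.

Lemma prod_dfa_recognizes : recognizes prod_dfa Lf.
Proof. by move=> w; rewrite /dfa_accepts /= pfinal_run. Qed.

Lemma prod_dfa_card : #|dfa_state prod_dfa| = m * 2 ^ n.
Proof. by rewrite /= card_prod card_ord card_ffun card_bool card_ord. Qed.

Theorem sc_unmerged : (forall u, exists y, f y u != f y (~~ u)) ->
  (forall v, f true v != f false v) ->
  state_complexity Lf (m * 2 ^ n).
Proof.
move=> hf hfx; split.
  by exists prod_dfa; split; [exact: prod_dfa_recognizes | exact: prod_dfa_card].
move=> D hD; rewrite -prod_dfa_card.
apply: (separable_lower_bound (sp := fun s : pstate => val s.1)
          (sB := fun s : pstate => s.2)) D hD; first by move=> s; exact: ltn_ord.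
move=> [p B] [p' B'] /= ne.
case: (eqVneq B B') => [eB|]; last exact: separable_subsets.
rewrite -eB; apply: separable_states; last by exists (Ordinal n0).
by apply: contraNneq ne => /val_inj ->; rewrite eB.
Qed.

(* If f(-, e) is constant, all pairs (p, [ffun => e]) merge into a sink. *)
Variable e : bool.
Hypothesis hfe : forall x, f x e = f false e.

Definition Econst : {ffun 'I_n -> bool} := [ffun => e].
Definition mstate := option ('I_m * {B : {ffun 'I_n -> bool} | B != Econst}).
Definition merge (s : pstate) : mstate :=
  if insub s.2 is Some B then Some (s.1, B) else None.
Definition mdelta (s : mstate) x : mstate :=
  if s is Some (p, B) then merge (pdelta (p, val B) x) else None.
Definition mfinal (s : mstate) :=
  if s is Some (p, B) then pfinal (p, val B) else f false e.
Definition merged_dfa := Dfa (merge pinit) mdelta mfinal.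

Lemma mdelta_run w : foldl mdelta (merge pinit) w = merge (foldl pdelta pinit w).
Proof.
elim/last_ind: w => [|w x IH] //; rewrite !foldl_rcons IH.
case: (foldl pdelta pinit w) => p B; rewrite /merge /=.
case: insubP => [B' _ hB'|]; first by rewrite /= hB'.
rewrite negbK => /eqP -> /=.
by rewrite insubN // negbK; apply/eqP/ffunP => i; rewrite !ffunE.
Qed.

Lemma merged_dfa_recognizes : recognizes merged_dfa Lf.
Proof.
move=> w; rewrite /dfa_accepts /= mdelta_run -pfinal_run.
case: (foldl pdelta pinit w) => p B; rewrite /merge /=.
case: insubP => [B' _ hB'|] /=; first by rewrite hB'.
by rewrite negbK => /eqP ->; rewrite /pfinal /= ffunE hfe.
Qed.

Lemma merged_dfa_card : #|dfa_state merged_dfa| = m * 2 ^ n - (m - 1).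
Proof.
rewrite /= card_option card_prod card_ord card_sig.
have -> : #|[pred B : {ffun 'I_n -> bool} | B != Econst]| = (2 ^ n).-1.
  have := cardC1 Econst; rewrite card_ffun card_bool card_ord => <-.
  exact: eq_card.
have : 1 <= 2 ^ n by rewrite expn_gt0.
set K := 2 ^ n => hK; have : m <= m * K by rewrite leq_pmulr.
by rewrite -subn1 mulnBr muln1; lia.
Qed.

Lemma nonconst_separable (hf2 : f true (~~ e) != f false (~~ e))
    (B : {ffun 'I_n -> bool}) : B != Econst -> exists i, f true (B i) != f false (B i).
Proof.
move=> hB; have [i hi] : exists i, B i != e.
  apply/existsP; apply: contraR hB => /existsPn h; apply/eqP/ffunP => i.
  by rewrite ffunE; apply/eqP; rewrite -[_ == _]negbK h.
by exists i; have -> : B i = ~~ e by case: (B i) e hi => [] [].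
Qed.

Theorem sc_merged : (forall u, exists y, f y u != f y (~~ u)) ->
  f true (~~ e) != f false (~~ e) ->
  state_complexity Lf (m * 2 ^ n - (m - 1)).
Proof.
move=> hf hf2; split.
  by exists merged_dfa; split; [exact: merged_dfa_recognizes | exact: merged_dfa_card].
move=> D hD; rewrite -merged_dfa_card.
pose sB (s : mstate) := if s is Some (_, B) then val B else Econst.
apply: (separable_lower_bound (sp := fun s : mstate => if s is Some (p, _) then val p else 0)
          (sB := sB)) D hD; first by case=> [[p B]|] //=; lia.
move=> s s' ne.
case: (eqVneq (sB s) (sB s')) => [eB|]; last exact: separable_subsets.
rewrite -eB; case: s s' ne eB => [[p B]|] [[p' B']|] //= ne eB.
- apply: separable_states; last exact: nonconst_separable (valP B).
  by apply: contraNneq ne => /val_inj ->; rewrite (val_inj eB).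
- by case: B eB => B0 + /= h; rewrite h eqxx.
- by case: B' eB => B0 + /= h; rewrite -h eqxx.
Qed.

End Combination.

(* Union, intersection and both differences each admit a value e of the
   reversed component at which f(-, e) is constant; symmetric difference
   depends on both components everywhere. *)
Theorem theorem2 (m n : nat) (hm : 3 <= m) (hn : 3 <= n) :
  [/\ state_complexity (fun w => U m w || lrev (U n) w) (m * 2 ^ n - (m - 1)),
      state_complexity (fun w => U m w && lrev (U n) w) (m * 2 ^ n - (m - 1)),
      state_complexity (fun w => U m w && ~~ lrev (U n) w) (m * 2 ^ n - (m - 1)),
      state_complexity (fun w => lrev (U n) w && ~~ U m w) (m * 2 ^ n - (m - 1))
    & state_complexity (fun w => U m w (+) lrev (U n) w) (m * 2 ^ n)].
Proof.
split.
- apply: (@sc_merged _ _ hm hn orb true) => //;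
  by case=> //; exists false.
- apply: (@sc_merged _ _ hm hn andb false) => //;
  by case=> //; exists true.
- apply: (@sc_merged _ _ hm hn (fun x y => x && ~~ y) true) => //;
  by case=> //; exists true.
- apply: (@sc_merged _ _ hm hn (fun x y => y && ~~ x) false) => //;
  by case=> //; exists false.
- apply: (@sc_unmerged _ _ hm hn addb) => //;
  by case=> //; exists false.
Qed.
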